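(* Let $G_1=(V_1,E_1)$ and $G_2=(V_2,E_2)$ be bispanning graphs on disjoint vertex and edge sets, let $d_1\in E_1$ have ends $x_1,y_1$ and $d_2\in E_2$ have ends $x_2,y_2$, and let $\sigma:\{x_1,y_1\}\to\{x_2,y_2\}$ be a bijection. Then the graph obtained from the disjoint union of $G_1$ and $G_2$ by identifying $x_1$ with $\sigma(x_1)$ and $y_1$ with $\sigma(y_1)$ and then deleting $d_1$ and $d_2$ (the $2$-clique sum with no remaining clique edges) is bispanning.
   Context: Graphs are finite, undirected, may have parallel edges, no loops. A spanning tree of $G=(V,E)$ is $T\subseteq E$ with $(V,T)$ connected and acyclic; $G$ is bispanning if $E$ is the union of two disjoint spanning trees. *)

From mathcomp Require Import all_boot.
Set Implicit Arguments. Unset Strict Implicit. Unset Printing Implicit Defensive.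

Section Multigraph.
Variables (V E : finType) (ends : E -> V * V).

Definition joins (e : E) (u v : V) : bool :=
  (((ends e).1 == u) && ((ends e).2 == v)) || (((ends e).1 == v) && ((ends e).2 == u)).

Definition loopless : Prop := forall e, (ends e).1 != (ends e).2.

Definition adjF (F : {set E}) : rel V := fun u v => [exists e in F, joins e u v].

Definition connectedF (F : {set E}) : Prop := forall u v : V, connect (adjF F) u v.

(* a cycle in (V, F): distinct vertices p = [v_0;..;v_{k-1}], distinct edges
   s = [e_0;..;e_{k-1}] of F, k >= 1, with e_i joining v_i and v_{i+1 mod k} *)
Definition is_cycle (F : {set E}) (p : seq V) (s : seq E) : Prop :=
  [/\ 0 < size s, size p = size s, uniq s && uniq p, all (fun e => e \in F) s &
      all (fun t => joins t.1 t.2.1 t.2.2) (zip s (zip p (rot 1 p)))].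

Definition acyclicF (F : {set E}) : Prop := ~ exists p s, is_cycle F p s.

Definition spanning_tree (T : {set E}) : Prop := connectedF T /\ acyclicF T.

Definition bispanning : Prop :=
  exists T1 T2 : {set E},
    [/\ [disjoint T1 & T2], T1 :|: T2 = [set: E], spanning_tree T1 & spanning_tree T2].

End Multigraph.

Section CliqueSum.
Variables (V1 E1 V2 E2 : finType) (ends1 : E1 -> V1 * V1) (ends2 : E2 -> V2 * V2)
          (d1 : E1) (d2 : E2) (sigma : V1 -> V2).

Definition x1 := (ends1 d1).1.
Definition y1 := (ends1 d1).2.
Definition x2 := (ends2 d2).1.
Definition y2 := (ends2 d2).2.

(* vertices: V1 together with the vertices of V2 other than x2, y2
   (x2, y2 are identified with sigma^-1 of them in V1) *)
Definition csum_V : finType := (V1 + {v : V2 | v \notin [:: x2; y2]})%type.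
Definition csum_E : finType := ({e : E1 | e != d1} + {e : E2 | e != d2})%type.

Definition glue2 (v : V2) : csum_V :=
  if v == sigma x1 then inl x1
  else if v == sigma y1 then inl y1
  else match insub v with Some u => inr u | None => inl x1 end.

Definition csum_ends (e : csum_E) : csum_V * csum_V :=
  match e with
  | inl e => (inl (ends1 (val e)).1, inl (ends1 (val e)).2)
  | inr e => (glue2 (ends2 (val e)).1, glue2 (ends2 (val e)).2)
  end.

End CliqueSum.

Arguments csum_ends {V1 E1 V2 E2} ends1 ends2 d1 d2 sigma e.

(* Call a boolean labelling of the vertices closed under an edge set F
   when no edge of F joins differently labelled vertices.  Then (V, F) is
   connected iff every closed labelling is constant, and acyclic iff every
   e in F is a bridge, i.e. separated by some labelling closed under F - e.
   Split G1 into trees A, B with d1 in A and G2 into trees C, D with d2 in C.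
   Then (A - d1) + D and B + (C - d2) are spanning trees of the clique sum:
   on either side, the tree containing the deleted edge is connected through
   the other side, and a bridge on one side is glued to a labelling of the
   other side that matches it on the identified vertices. *)
From mathcomp Require Import all_boot.
Set Implicit Arguments. Unset Strict Implicit. Unset Printing Implicit Defensive.

Lemma setD1_id (T : finType) (A : {set T}) x : x \notin A -> A :\ x = A.
Proof. by move=> xA; apply/setDidPl; rewrite disjoint_sym disjoints1. Qed.

Section Labellings.
Variables (V E : finType) (ends : E -> V * V).

Definition closedF (F : {set E}) (s : V -> bool) :=
  forall e, e \in F -> s (ends e).1 = s (ends e).2.

Definition bridgeF (F : {set E}) (e : E) :=
  exists2 s, closedF (F :\ e) s & s (ends e).1 != s (ends e).2.

Lemma closedS (F G : {set E}) s : F \subset G -> closedF G s -> closedF F s.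
Proof. by move=> /subsetP sFG Gs e /sFG; apply: Gs. Qed.

Lemma closedF_setD1 (F : {set E}) e s :
  closedF (F :\ e) s -> s (ends e).1 = s (ends e).2 -> closedF F s.
Proof. by move=> Fs se f Ff; case: (eqVneq f e) => [-> //|fe]; apply: Fs; rewrite !inE fe. Qed.

Lemma closedF_joins F s e u v : closedF F s -> e \in F -> joins ends e u v -> s u = s v.
Proof.
by move=> Fs eF /orP[] /andP[/eqP<- /eqP<-]; rewrite (Fs e eF).
Qed.

Lemma closedF_connect F s u v : closedF F s -> connect (adjF ends F) u v -> s u = s v.
Proof.
move=> Fs /connectP[p + ->]; elim: p u => [|w p IHp] u //= /andP[/existsP[e /andP[eF euw]] wp].
by rewrite (closedF_joins Fs eF euw) IHp.
Qed.

Lemma closedF_component F u : closedF F (connect (adjF ends F) u).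
Proof.
move=> e eF; have adj x y : joins ends e x y -> adjF ends F x y.
  by move=> exy; apply/existsP; exists e; rewrite eF.
by apply/idP/idP => /connect_trans; apply; apply/connect1/adj; rewrite /joins !eqxx ?orbT.
Qed.

Lemma connectedP F : connectedF ends F <-> forall s, closedF F s -> forall u v, s u = s v.
Proof.
split=> [Fconn s Fs u v|Fconst u v]; first exact: closedF_connect Fs (Fconn u v).
by rewrite -(Fconst _ (closedF_component (F := F) u) u v) connect0.
Qed.

Lemma closedF_recolor F s a b : closedF F s -> s a != s b ->
  forall alpha beta : bool, exists s', [/\ closedF F s', s' a = alpha & s' b = beta].
Proof.
move=> Fs sab alpha beta.
exists (fun v => if s v == s a then alpha else beta); split.
- by move=> e eF /=; rewrite (Fs e eF).
- by rewrite eqxx.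
- by rewrite eq_sym (negbTE sab).
Qed.

Lemma closedF_chain F s x y q r : closedF F s -> all [in F] r -> size r = (size q).+1 ->
  all (fun t => joins ends t.1 t.2.1 t.2.2) (zip r (zip (x :: q) (rcons q y))) -> s x = s y.
Proof.
move=> Fs; elim: q x r => [|z q IHq] x [|f r] //=.
  by move=> /andP[fF _] _ /andP[fxy _]; exact: closedF_joins Fs fF fxy.
move=> /andP[fF rF] [size_r] /andP[fxz rq].
by rewrite (closedF_joins Fs fF fxz); exact: IHq rF size_r rq.
Qed.

Lemma bridges_acyclic (F : {set E}) : {in F, forall e, bridgeF F e} -> acyclicF ends F.
Proof.
move=> Fbridge [[|a q] [[|e s] [//= _ [size_s] /andP[/andP[es us] _] /andP[eF sF]]]] //.
case: (Fbridge e eF) => t Ft tne; rewrite rot1_cons.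
have sFe : all [in F :\ e] s.
  by apply/allP => f fs; rewrite !inE (allP sF f fs) andbT; apply: contraNneq es => <-.
case: q size_s => [|b q] /= size_s /andP[eab chain].
  by move: eab; rewrite /joins orbb => /andP[/eqP e1 /eqP e2]; rewrite e1 e2 eqxx in tne.
have tba := closedF_chain Ft sFe (esym size_s) chain.
by case/orP: eab => /andP[/eqP e1 /eqP e2]; rewrite e1 e2 tba eqxx in tne.
Qed.

Lemma path_edges F u p : path (adjF ends F) u p -> uniq (u :: p) ->
  exists s, [/\ size s = size p, uniq s, all [in F] s,
    all (fun t => joins ends t.1 t.2.1 t.2.2) (zip s (zip (belast u p) p)) &
    all (fun f => ((ends f).1 \in u :: p) && ((ends f).2 \in u :: p)) s].
Proof.
elim: p u => [|y p IHp] u /=; first by exists [::].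
move=> /andP[/existsP[f /andP[fF fuy]] yp] /andP[up uyp].
have [s [size_s us sF chain sV]] := IHp y yp uyp.
have f_ends : (ends f).1 \in [:: u, y & p] /\ (ends f).2 \in [:: u, y & p].
  by case/orP: fuy => /andP[/eqP-> /eqP->]; rewrite !inE !eqxx ?orbT.
exists (f :: s); split; rewrite /= ?size_s ?fF ?fuy ?us ?sF ?chain ?f_ends.1 ?f_ends.2 //.
- rewrite andbT; apply: contraTN fuy => /(allP sV) /andP[f1 f2].
  by apply/negP => /orP[] /andP[/eqP f1u /eqP f2u]; rewrite ?f1u ?f2u (negbTE up) in f1 f2.
- by apply/allP => g /(allP sV) /andP[g1 g2]; rewrite !inE in g1 g2 *; rewrite g1 g2 !orbT.
Qed.

Lemma acyclic_bridge F e : acyclicF ends F -> e \in F -> bridgeF F e.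
Proof.
move=> Facyc eF; exists (connect (adjF ends (F :\ e)) (ends e).1).
  exact: closedF_component.
rewrite connect0; apply/negP => /eqP/esym/connectP[p p_path last_p]; apply: Facyc.
case/shortenP: p_path last_p => p' p'e up' _ last_p'.
have [s [size_s us sF chain _]] := path_edges p'e up'.
exists ((ends e).1 :: p'), (rcons s e); split.
- by rewrite size_rcons.
- by rewrite size_rcons size_s.
- rewrite rcons_uniq us up' !andbT.
  by apply/negP => /(allP sF); rewrite !inE eqxx.
- by rewrite all_rcons eF; apply/allP => f /(allP sF); rewrite !inE => /andP[].
- rewrite rot1_cons [(ends e).1 :: p']lastI zip_rcons ?size_belast //.
  rewrite zip_rcons; last by rewrite size_zip size_belast size_s minnn.
  by rewrite all_rcons chain andbT /= -last_p' /joins !eqxx orbT.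
Qed.

Lemma bispanning_containing d : bispanning ends ->
  exists T1 T2 : {set E}, [/\ [disjoint T1 & T2], T1 :|: T2 = [set: E],
    spanning_tree ends T1, spanning_tree ends T2 & d \in T1].
Proof.
case=> T1 [T2 [T12 cover tree1 tree2]].
have : d \in T1 :|: T2 by rewrite cover inE.
case/setUP => [dT1|dT2]; first by exists T1, T2.
by exists T2, T1; rewrite disjoint_sym setUC.
Qed.

End Labellings.

Section CliqueSum.
Variables (V1 E1 V2 E2 : finType) (ends1 : E1 -> V1 * V1) (ends2 : E2 -> V2 * V2)
  (d1 : E1) (d2 : E2) (sigma : V1 -> V2).

Local Notation a1 := (ends1 d1).1.
Local Notation b1 := (ends1 d1).2.
Local Notation a2 := (ends2 d2).1.
Local Notation b2 := (ends2 d2).2.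

Hypotheses (sigma_a1 : sigma a1 \in [:: a2; b2]) (sigma_b1 : sigma b1 \in [:: a2; b2])
  (sigma_inj : sigma a1 != sigma b1).

Local Notation VV := (csum_V V1 ends2 d2).
Local Notation EE := (csum_E d1 d2).
Local Notation G := (csum_ends ends1 ends2 d1 d2 sigma).
Local Notation glue := (glue2 ends1 ends2 d1 d2 sigma).

Definition csum_set (L : {set E1}) (R : {set E2}) : {set EE} :=
  [set e : EE | match e with inl e => val e \in L | inr e => val e \in R end].

Definition csum_label (s1 : V1 -> bool) (s2 : V2 -> bool) (x : VV) : bool :=
  match x with inl v => s1 v | inr w => s2 (val w) end.

Lemma sigma_ends w : w \in [:: a2; b2] -> (w == sigma a1) || (w == sigma b1).
Proof.
move: sigma_a1 sigma_b1 sigma_inj; rewrite !inE.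
by case/orP=> /eqP-> /orP[]/eqP->; rewrite ?eqxx //= => _ /orP[]/eqP->; rewrite eqxx ?orbT.
Qed.

Lemma eq_sigma_ends (f : V2 -> bool) : (f (sigma a1) == f (sigma b1)) = (f a2 == f b2).
Proof.
move: sigma_a1 sigma_b1 sigma_inj; rewrite !inE.
by case/orP=> /eqP-> /orP[]/eqP->; rewrite ?eqxx // eq_sym.
Qed.

Lemma glue_a1 : glue (sigma a1) = inl a1.
Proof. by rewrite /glue2 eqxx. Qed.

Lemma glue_b1 : glue (sigma b1) = inl b1.
Proof. by rewrite /glue2 eq_sym (negbTE sigma_inj) eqxx. Qed.

Lemma glue_val w : glue (val w) = inr w.
Proof.
have w_new := valP w; rewrite /glue2.
case: ifP => [/eqP wa|_]; first by rewrite wa sigma_a1 in w_new.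
case: ifP => [/eqP wb|_]; first by rewrite wb sigma_b1 in w_new.
by rewrite valK.
Qed.

Lemma csum_label_glue s1 s2 : s1 a1 = s2 (sigma a1) -> s1 b1 = s2 (sigma b1) ->
  forall w, csum_label s1 s2 (glue w) = s2 w.
Proof.
move=> s12a s12b w; case: (boolP (w \in [:: a2; b2])) => [/sigma_ends|w_new].
  by case/orP=> /eqP->; rewrite ?glue_a1 ?glue_b1.
by rewrite -[w]/(val (Sub w w_new : {v | v \notin [:: x2 ends2 d2; y2 ends2 d2]})) glue_val.
Qed.

Lemma csum_label_closed L R s1 s2 :
  closedF ends1 (L :\ d1) s1 -> closedF ends2 (R :\ d2) s2 ->
  s1 a1 = s2 (sigma a1) -> s1 b1 = s2 (sigma b1) ->
  closedF G (csum_set L R) (csum_label s1 s2).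
Proof.
move=> Ls1 Rs2 s12a s12b [e|e]; rewrite inE /= => eLR.
  by apply: Ls1; rewrite !inE eLR (valP e).
by rewrite !(csum_label_glue s12a s12b); apply: Rs2; rewrite !inE eLR (valP e).
Qed.

Lemma closedF_csum_inl L R S : closedF G (csum_set L R) S ->
  closedF ends1 (L :\ d1) (fun v => S (inl v)).
Proof. by move=> LRS e; rewrite !inE => /andP[ed eL]; apply: (LRS (inl (Sub e ed))); rewrite inE. Qed.

Lemma closedF_csum_inr L R S : closedF G (csum_set L R) S ->
  closedF ends2 (R :\ d2) (fun w => S (glue w)).
Proof. by move=> LRS e; rewrite !inE => /andP[ed eR]; apply: (LRS (inr (Sub e ed))); rewrite inE. Qed.

Lemma csum_constant (S : VV -> bool) :
  (forall u v, S (inl u) = S (inl v)) -> (forall u v, S (glue u) = S (glue v)) ->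
  forall x y, S x = S y.
Proof.
move=> S1 S2; suff Sa1 x : S x = S (inl a1) by move=> x y; rewrite !Sa1.
case: x => [v|w]; first exact: S1.
by rewrite -glue_val -glue_a1; apply: S2.
Qed.

Lemma csum_setD1l L R (e : {e | e != d1}) : csum_set L R :\ inl e = csum_set (L :\ val e) R.
Proof. by apply/setP => -[f|f]; rewrite !inE. Qed.

Lemma csum_setD1r L R (e : {e | e != d2}) : csum_set L R :\ inr e = csum_set L (R :\ val e).
Proof. by apply/setP => -[f|f]; rewrite !inE. Qed.

Lemma connected_csum_l L R : connectedF ends1 L -> connectedF ends2 (R :\ d2) ->
  connectedF G (csum_set L R).
Proof.
move=> /connectedP Lconn /connectedP Rconn; apply/connectedP => S LRS.
have S2 := Rconn _ (closedF_csum_inr LRS).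
apply: csum_constant (S2); apply: Lconn; apply: closedF_setD1 (closedF_csum_inl LRS) _.
by rewrite -glue_a1 -glue_b1; apply: S2.
Qed.

Lemma connected_csum_r L R : connectedF ends1 (L :\ d1) -> connectedF ends2 R ->
  connectedF G (csum_set L R).
Proof.
move=> /connectedP Lconn /connectedP Rconn; apply/connectedP => S LRS.
have S1 := Lconn _ (closedF_csum_inl LRS).
apply: csum_constant (S1) _; apply: Rconn; apply: closedF_setD1 (closedF_csum_inr LRS) _.
by apply/eqP; rewrite -(eq_sigma_ends (fun w => S (glue w))) glue_a1 glue_b1 (S1 _ b1).
Qed.

Lemma acyclic_csum_l L R : acyclicF ends1 L -> acyclicF ends2 R -> d1 \in L ->
  acyclicF G (csum_set L R).
Proof.
move=> Lacyc Racyc d1L; apply: bridges_acyclic => -[e|e]; rewrite inE /= => eLR.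
  have [t Lt te] := acyclic_bridge Lacyc eLR.
  have tab : t a1 = t b1 by apply: Lt; rewrite !inE d1L andbT eq_sym (valP e).
  exists (csum_label t (fun=> t a1)) => //.
  by rewrite csum_setD1l; apply: csum_label_closed => //; apply: closedS (subD1set _ _) Lt.
have [t Rt te] := acyclic_bridge Racyc eLR.
have [r Lr rd] := acyclic_bridge Lacyc d1L.
have [s1 [Ls1 s1a s1b]] := closedF_recolor Lr rd (t (sigma a1)) (t (sigma b1)).
exists (csum_label s1 t); last by rewrite /= !(csum_label_glue s1a s1b).
by rewrite csum_setD1r; apply: csum_label_closed => //; apply: closedS (subD1set _ _) Rt.
Qed.

Lemma acyclic_csum_r L R : acyclicF ends1 L -> acyclicF ends2 R -> d2 \in R ->
  acyclicF G (csum_set L R).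
Proof.
move=> Lacyc Racyc d2R; apply: bridges_acyclic => -[e|e]; rewrite inE /= => eLR.
  have [t Lt te] := acyclic_bridge Lacyc eLR.
  have [r Rr rd] := acyclic_bridge Racyc d2R.
  rewrite -(eq_sigma_ends r) in rd.
  have [s2 [Rs2 s2a s2b]] := closedF_recolor Rr rd (t a1) (t b1).
  exists (csum_label t s2) => //.
  by rewrite csum_setD1l; apply: csum_label_closed => //; apply: closedS (subD1set _ _) Lt.
have [t Rt te] := acyclic_bridge Racyc eLR.
have tab : t (sigma a1) = t (sigma b1).
  by apply/eqP; rewrite eq_sigma_ends; apply/eqP/Rt; rewrite !inE d2R andbT eq_sym (valP e).
have glue_t := csum_label_glue (s1 := fun=> t (sigma a1)) erefl tab.
exists (csum_label (fun=> t (sigma a1)) t); last by rewrite /= !glue_t.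
by rewrite csum_setD1r; apply: csum_label_closed => //; apply: closedS (subD1set _ _) Rt.
Qed.

Lemma csum_bispanning (A B : {set E1}) (C D : {set E2}) :
  [disjoint A & B] -> A :|: B = [set: E1] -> spanning_tree ends1 A -> spanning_tree ends1 B ->
  [disjoint C & D] -> C :|: D = [set: E2] -> spanning_tree ends2 C -> spanning_tree ends2 D ->
  d1 \in A -> d2 \in C -> bispanning G.
Proof.
move=> AB ABcover [Aconn Aacyc] [Bconn Bacyc] CD CDcover [Cconn Cacyc] [Dconn Dacyc] d1A d2C.
exists (csum_set A D), (csum_set B C); split.
- rewrite disjoint_subset; apply/subsetP => -[e|e]; rewrite !inE /= => eAD.
    by rewrite (disjointFr AB eAD).
  by rewrite (disjointFl CD eAD).
- apply/setP => -[e|e]; rewrite !inE /=.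
    by rewrite -in_setU ABcover inE.
  by rewrite orbC -in_setU CDcover inE.
- split; last exact: acyclic_csum_l.
  by apply: connected_csum_l; rewrite // setD1_id // (disjointFr CD d2C).
- split; last exact: acyclic_csum_r.
  by apply: connected_csum_r; rewrite // setD1_id // (disjointFr AB d1A).
Qed.

End CliqueSum.

Theorem mainTheorem9 (V1 E1 V2 E2 : finType)
  (ends1 : E1 -> V1 * V1) (ends2 : E2 -> V2 * V2)
  (loop1 : loopless ends1) (loop2 : loopless ends2)
  (B1 : bispanning ends1) (B2 : bispanning ends2)
  (d1 : E1) (d2 : E2) (sigma : V1 -> V2)
  (Hsx : sigma (ends1 d1).1 \in [:: (ends2 d2).1; (ends2 d2).2])
  (Hsy : sigma (ends1 d1).2 \in [:: (ends2 d2).1; (ends2 d2).2])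
  (Hsinj : sigma (ends1 d1).1 != sigma (ends1 d1).2) :
  bispanning (csum_ends ends1 ends2 d1 d2 sigma).
Proof.
have [A [B [AB ABcover treeA treeB d1A]]] := bispanning_containing d1 B1.
have [C [D [CD CDcover treeC treeD d2C]]] := bispanning_containing d2 B2.
exact: (csum_bispanning Hsx Hsy Hsinj AB ABcover treeA treeB CD CDcover treeC treeD d1A d2C).
Qed.
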